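(* Let $L=(l_1,\dots,l_n)$, $n\ge 4$, be a generic length vector satisfying the strict triangle inequality. For any two vertices $V,V'$ of $\Gamma(L)$, there is a path in $\Gamma(L)$ of length at most $7$ from $V$ either to $V'$ or to the mirror image of $V'$.
   Context: Let $n\ge 4$ and $L=(l_1,\dots,l_n)$ be positive reals with $l_i<\sum_{j\ne i}l_j$ for every $i$ (strict triangle inequality), and generic: there is no $J\subseteq[n]$ with $\sum_{i\in J}l_i=\sum_{i\notin J}l_i$. Here $[n]=\{1,\dots,n\}$ and $|L|=\sum_{i=1}^n l_i$. A set $I\subseteq[n]$ is short if $\sum_{i\in I}l_i<|L|/2$ and long otherwise. A cyclically ordered partition of $[n]$ into $k$ parts is a sequence $(A_1,\dots,A_k)$ of pairwise disjoint nonempty sets with union $[n]$, considered up to cyclic shifts $(A_1,\dots,A_k)\sim(A_2,\dots,A_k,A_1)$; there is no ordering inside a part. It is admissible if every part is short. The graph $\Gamma(L)$ has as vertices the admissible cyclically ordered partitions of $[n]$ into 3 parts, written $(I,J,K)$, and as edges the admissible cyclically ordered partitions into 4 parts $(A,B,C,D)$; such an edge is incident to each of the partitions $(A\cup B,C,D)$, $(A,B\cup C,D)$, $(A,B,C\cup D)$, $(D\cup A,B,C)$ that is admissible. Equivalently, two vertices are adjacent iff one is obtained from the other by moving a nonempty proper subset of one part into another part. The length of a path is its number of edges. The mirror image of a vertex $(I,J,K)$ is the vertex $(J,I,K)$ (same parts, reversed cyclic order). *)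

From HB Require Import structures.
From mathcomp Require Import all_boot all_order all_algebra.
Set Implicit Arguments. Unset Strict Implicit. Unset Printing Implicit Defensive.
Import Order.TTheory GRing.Theory Num.Theory.
Local Open Scope ring_scope.

Section Polygon.
Variables (R : realFieldType) (n : nat) (l : 'I_n -> R).

Definition totlen : R := \sum_(i < n) l i.

Definition short (S : {set 'I_n}) : bool := (\sum_(i in S) l i) < totlen / 2%:R.

(* ordered triples / quadruples of subsets; cyclic order is handled by cyc3 / cyc4 *)
Definition triple := ({set 'I_n} * {set 'I_n} * {set 'I_n})%type.
Definition quad := ({set 'I_n} * {set 'I_n} * {set 'I_n} * {set 'I_n})%type.

Definition mk3 (P1 P2 P3 : {set 'I_n}) : triple := (P1, P2, P3).
Definition mk4 (A B C D : {set 'I_n}) : quad := (A, B, C, D).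

Definition vertex3 (T : triple) : bool :=
  let: (P1, P2, P3) := T in
  [&& P1 != set0, P2 != set0, P3 != set0,
      [disjoint P1 & P2], [disjoint P2 & P3], [disjoint P1 & P3],
      P1 :|: P2 :|: P3 == [set: 'I_n],
      short P1, short P2 & short P3].

Definition edge4 (Q : quad) : bool :=
  let: (A, B, C, D) := Q in
  [&& A != set0, B != set0, C != set0, D != set0,
      [&& [disjoint A & B], [disjoint A & C], [disjoint A & D],
          [disjoint B & C], [disjoint B & D] & [disjoint C & D]],
      A :|: B :|: C :|: D == [set: 'I_n] &
      [&& short A, short B, short C & short D]].

Definition cyc3 (T T' : triple) : bool :=
  let: (P1, P2, P3) := T in
  [|| T' == mk3 P1 P2 P3, T' == mk3 P2 P3 P1 | T' == mk3 P3 P1 P2].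

Definition mirror (T : triple) : triple :=
  let: (P1, P2, P3) := T in mk3 P2 P1 P3.

Definition merge (Q : quad) (k : 'I_4) : triple :=
  let: (A, B, C, D) := Q in
  match val k with
  | 0 => mk3 (A :|: B) C D
  | 1 => mk3 A (B :|: C) D
  | 2 => mk3 A B (C :|: D)
  | _ => mk3 (D :|: A) B C
  end.

Definition adj (T T' : triple) : bool :=
  [&& vertex3 T, vertex3 T' &
   [exists Q : quad, [exists k : 'I_4, [exists k' : 'I_4,
      [&& edge4 Q, k != k', cyc3 (merge Q k) T & cyc3 (merge Q k') T']]]]].

End Polygon.

(* Fix a longest side m.  Call a vertex a hub if one of its parts is {m}.
   - [reach_hub]: every vertex reaches a hub in at most two moves.  One moves
     a subset S of the part A containing m (minus m) into a second part B,
     then the rest of A \ {m} into the third part; a greedy subset-sum bound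
     ([subset_window]) and genericity choose S so that both receiving parts
     stay short.
   - [hub_hub]: two hubs ({m},B,C) and ({m},B',C') are at distance at most 3,
     by a case analysis on the intersections B :&: B', B :&: C', C :&: B'.
   Every move is an instance of [reach_move]: two vertices sharing a part,
   one part shrinking, are adjacent (or equal).  Paths are handled through
   [reach k T U] (a path of length <= k from T to U up to a cyclic shift and
   mirror image), which composes, reverses, and is invariant under the same
   symmetries; the theorem is then 2 + 3 + 2 = 7 steps. *)

From Pilot Require Import Defs.
From HB Require Import structures.
From mathcomp Require Import all_boot all_order all_algebra.
From mathcomp Require Import lra.
Import Order.TTheory GRing.Theory Num.Theory.
Local Open Scope ring_scope.
Set Implicit Arguments. Unset Strict Implicit. Unset Printing Implicit Defensive.

Definition same3 (n : nat) (U X : triple n) : bool := cyc3 U X || cyc3 (mirror U) X.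

Ltac same3_solve :=
  rewrite /same3 /cyc3 /mirror /mk3;
  solve [ apply/orP; (left + right); apply/or3P;
            (apply: Or31 + apply: Or32 + apply: Or33); exact/eqP
        | apply/or3P; (apply: Or31 + apply: Or32 + apply: Or33); exact/eqP ].

Ltac triple_cases :=
  repeat match goal with T : triple _ |- _ => move: T => [[? ?] ?] end;
  rewrite /same3 /cyc3 /mirror /mk3;
  repeat (case/orP || case/or3P || case/eqP => -> -> ->);
  same3_solve.

Section Equivalence.
Variable n : nat.
Implicit Types T U W : triple n.

Lemma cyc3_refl T : cyc3 T T.
Proof. by triple_cases. Qed.

Lemma cyc3_trans T U W : cyc3 T U -> cyc3 U W -> cyc3 T W.
Proof. by triple_cases. Qed.

Lemma cyc3_mirror T U : cyc3 T U -> cyc3 (mirror T) (mirror U).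
Proof. by triple_cases. Qed.

Lemma same3_refl T : same3 T T.
Proof. by triple_cases. Qed.

Lemma same3_sym T U : same3 T U -> same3 U T.
Proof. by triple_cases. Qed.

Lemma same3_trans T U W : same3 T U -> same3 U W -> same3 T W.
Proof. by triple_cases. Qed.

Lemma same3_mirror T U : same3 T U -> same3 T (mirror U).
Proof. by triple_cases. Qed.

End Equivalence.

Definition partition3 (n : nat) (X Y Z : {set 'I_n}) : Prop :=
  forall i : 'I_n, ((i \in X) + (i \in Y) + (i \in Z) = 1)%N.

(* Pointwise set reasoning: reduce a goal about finitely many sets to a
   Boolean tautology in the memberships of one generic point, using the
   partition, emptiness, disjointness and covering facts in the context. *)
Ltac set_solve :=
  let i := fresh "i" in
  first [ apply/setP => i | rewrite -setI_eq0; apply/eqP/setP => i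
        | apply/subsetP => i | move=> i ];
  repeat match goal with
  | H : partition3 _ _ _ |- _ => move: (H i); clear H
  | H : forall j : ordinal _, @?P j |- _ => move: (H i); clear H
  | H : is_true (_ == set0) |- _ => move/eqP/setP/(_ i): H
  | H : _ = set0 |- _ => move/setP/(_ i): H
  | H : is_true (_ == [set: _]) |- _ => move/eqP/setP/(_ i): H
  | H : is_true [disjoint _ & _] |- _ => move: H; rewrite -setI_eq0 => /eqP/setP/(_ i)
  | H : is_true (_ \subset _) |- _ => move/subsetP/(_ i)/implyP: H
  | H : is_true (_ \in _) |- _ => move: H
  end;
  rewrite ?inE;
  repeat match goal with
  | |- context [?x == ?x] => rewrite eqxx
  | |- context [?x == ?y] => case: (eqVneq x y) => [->|_]
  | |- context [?x \in ?A] => case: (x \in A)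
  end;
  move=> *; by [].

Lemma mem_neq0 (T : finType) (x : T) (A : {set T}) : x \in A -> A != set0.
Proof. by move=> xA; apply/set0Pn; exists x. Qed.

Lemma neq0_sub (T : finType) (A B : {set T}) : A \subset B -> A != set0 -> B != set0.
Proof. by move=> sAB; apply: contraNneq => B0; rewrite -subset0 -B0. Qed.

Section Graph.
Variables (R : realFieldType) (n : nat) (l : 'I_n -> R).
Implicit Types (T U W : triple n) (X Y Z : {set 'I_n}).

Lemma vertex3P X Y Z :
  reflect [/\ partition3 X Y Z, [/\ X != set0, Y != set0 & Z != set0]
            & [/\ short l X, short l Y & short l Z]]
          (vertex3 l (X, Y, Z)).
Proof.
apply: (iffP idP).
  case/and4P => nX nY nZ /and4P [dXY dYZ dXZ /and4P [cov sX sY sZ]].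
  by split => //; set_solve.
move=> [pt [nX nY nZ] [sX sY sZ]].
rewrite /vertex3 nX nY nZ sX sY sZ /= !andbT.
by apply/and4P; split; [set_solve | set_solve | set_solve | apply/eqP; set_solve].
Qed.

Lemma vertex3_same3 T U : same3 T U -> vertex3 l T -> vertex3 l U.
Proof.
move: T U => [[X Y] Z] [[X' Y'] Z']; rewrite /same3 /cyc3 /mirror /mk3.
case/orP => /or3P [] /eqP [-> -> ->] /vertex3P [pt [? ? ?] [? ? ?]];
  by apply/vertex3P; split; [set_solve | split | split].
Qed.

Lemma edge4P (A B C D : {set 'I_n}) :
  reflect [/\ forall i : 'I_n, ((i \in A) + (i \in B) + (i \in C) + (i \in D) = 1)%N,
            [/\ A != set0, B != set0, C != set0 & D != set0]
            & [/\ short l A, short l B, short l C & short l D]]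
          (edge4 l (A, B, C, D)).
Proof.
apply: (iffP idP).
  case/and4P => nA nB nC /and4P [nD /and5P [dAB dAC dAD dBC /andP [dBD dCD]] cov].
  by case/and4P => sA sB sC sD; split => //; set_solve.
move=> [pt [nA nB nC nD] [sA sB sC sD]].
rewrite /edge4 nA nB nC nD sA sB sC sD /= !andbT.
apply/andP; split; last by apply/eqP; set_solve.
by apply/and5P; split; [set_solve.. | apply/andP; split; set_solve].
Qed.

Lemma adj_cyc T U T' U' : adj l T U -> cyc3 T T' -> cyc3 U U' -> adj l T' U'.
Proof.
case/and3P => vT vU /existsP [Q /existsP [k /existsP [k' /and4P [e kk cT cU]]]] hT hU.
have vT' : vertex3 l T' by apply: vertex3_same3 vT; rewrite /same3 hT.
have vU' : vertex3 l U' by apply: vertex3_same3 vU; rewrite /same3 hU.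
rewrite /adj vT' vU' /=; apply/existsP; exists Q; apply/existsP; exists k; apply/existsP; exists k'.
by rewrite e kk (cyc3_trans cT hT) (cyc3_trans cU hU).
Qed.

Lemma adj_sym T U : adj l T U -> adj l U T.
Proof.
case/and3P => vT vU /existsP [Q /existsP [k /existsP [k' /and4P [e kk cT cU]]]].
rewrite /adj vT vU /=; apply/existsP; exists Q; apply/existsP; exists k'.
by apply/existsP; exists k; rewrite e eq_sym kk cT cU.
Qed.

(* The mirror image of the edge (A,B,C,D) is the edge (A,D,C,B); merging
   parts k and k+1 of the former corresponds to merging parts 3-k and 4-k
   of the latter. *)
Definition mirror4 (Q : quad n) : quad n := let: (A, B, C, D) := Q in (A, D, C, B).

Lemma edge4_mirror Q : edge4 l Q -> edge4 l (mirror4 Q).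
Proof.
case: Q => [[[A B] C] D] /edge4P [pt [? ? ? ?] [? ? ? ?]].
by apply/edge4P; split; [set_solve | split | split].
Qed.

Lemma merge_mirror (Q : quad n) (k : 'I_4) :
  cyc3 (Defs.merge (mirror4 Q) (rev_ord k)) (mirror (Defs.merge Q k)).
Proof.
case: Q => [[[A B] C] D]; case: k => [[|[|[|[|k]]]] hk] //=;
  rewrite /Defs.merge /mirror /= ?(setUC A) ?(setUC C) ?(setUC D);
  by apply/or3P; (apply: Or31 + apply: Or32 + apply: Or33); exact/eqP.
Qed.

Lemma adj_mirror T U : adj l T U -> adj l (mirror T) (mirror U).
Proof.
case/and3P => vT vU /existsP [Q /existsP [k /existsP [k' /and4P [e kk cT cU]]]].
rewrite /adj (vertex3_same3 (same3_mirror (same3_refl T)) vT).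
rewrite (vertex3_same3 (same3_mirror (same3_refl U)) vU) /=.
apply/existsP; exists (mirror4 Q); apply/existsP; exists (rev_ord k).
apply/existsP; exists (rev_ord k'); rewrite edge4_mirror // (inj_eq rev_ord_inj) kk.
by rewrite (cyc3_trans (merge_mirror Q k) (cyc3_mirror cT))
           (cyc3_trans (merge_mirror Q k') (cyc3_mirror cU)).
Qed.

Lemma path_mirror T s :
  path (adj l) T s -> path (adj l) (mirror T) (map (@mirror n) s).
Proof.
by elim: s T => [|U s IH] T //= /andP [hTU hs]; rewrite adj_mirror // IH.
Qed.

Definition reach (k : nat) T U : Prop :=
  exists s : seq (triple n),
    [/\ (size s <= k)%N, path (adj l) T s & same3 U (last T s)].

Lemma reach_refl k T U : same3 U T -> reach k T U.
Proof. by exists [::]. Qed.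

Lemma reach_mono k k' T U : (k <= k')%N -> reach k T U -> reach k' T U.
Proof. by move=> hk [s [hs hp hl]]; exists s; split; first exact: leq_trans hk. Qed.

Lemma reach_adj T U : adj l T U -> reach 1 T U.
Proof. by move=> hTU; exists [:: U]; rewrite /= hTU same3_refl. Qed.

Lemma reach_target k T U U' : same3 U U' -> reach k T U -> reach k T U'.
Proof.
by move=> hU [s [hs hp hl]]; exists s; split; last exact: same3_trans (same3_sym hU) hl.
Qed.

Lemma reach_cyc k T T' U : cyc3 T T' -> reach k T U -> reach k T' U.
Proof.
move=> hT [s [hs hp hl]]; exists s; split; first exact: hs.
  case: s hp {hs hl} => [|V s] //= /andP [hTV ->].
  by rewrite (adj_cyc hTV hT (cyc3_refl V)).
case: s hl {hs hp} => [|V s] /= hl; last exact: hl.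
by apply: same3_trans hl _; rewrite /same3 hT.
Qed.

Lemma reach_mirror k T U : reach k T U -> reach k (mirror T) U.
Proof.
move=> [s [hs hp hl]]; exists (map (@mirror n) s).
by rewrite size_map last_map path_mirror // same3_mirror.
Qed.

Lemma reach_source k T T' U : same3 T T' -> reach k T U -> reach k T' U.
Proof.
case/orP => [hT | hT] hr; first exact: reach_cyc hT hr.
exact: reach_cyc hT (reach_mirror hr).
Qed.

Lemma reach_trans a b T U W : reach a T U -> reach b U W -> reach (a + b) T W.
Proof.
move=> [s1 [hs1 hp1 hl1]] /(reach_source hl1) [s2 [hs2 hp2 hl2]].
by exists (s1 ++ s2); rewrite size_cat leq_add // cat_path hp1 last_cat.
Qed.

Lemma reach_sym k T U : reach k T U -> reach k U T.
Proof.
move=> [s [hs hp hl]].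
suff back : reach k (last T s) T by exact: reach_source (same3_sym hl) back.
exists (rev (belast T s)); split.
- by rewrite size_rev size_belast.
- by rewrite rev_path; apply: sub_path hp => ? ?; apply: adj_sym.
- by case: s {hs hp hl} => [|V s]; rewrite /= ?rev_cons ?last_rcons same3_refl.
Qed.

End Graph.

Section Weights.
Variables (R : realFieldType) (n : nat) (l : 'I_n -> R).
Hypothesis hpos : forall i, 0 < l i.
Hypothesis hgen : forall J : {set 'I_n}, \sum_(i in J) l i != \sum_(i in ~: J) l i.
Implicit Types S A B : {set 'I_n}.

Definition weight S : R := \sum_(i in S) l i.
Local Notation half := (totlen l / 2%:R).

Lemma shortE S : short l S = (weight S < half).
Proof. by []. Qed.

Lemma weight0 : weight set0 = 0.
Proof. exact: big_set0. Qed.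

Lemma weight1 i : weight [set i] = l i.
Proof. exact: big_set1. Qed.

Lemma weightU A B : [disjoint A & B] -> weight (A :|: B) = weight A + weight B.
Proof.
by move=> dAB; rewrite /weight -bigU //; apply: eq_bigl => i; rewrite !inE.
Qed.

Lemma weightC S : weight (~: S) = totlen l - weight S.
Proof.
rewrite /totlen (bigID (mem S)) /= addrC addrK.
by apply: eq_bigl => i; rewrite !inE.
Qed.

Lemma weight_le A B : A \subset B -> weight A <= weight B.
Proof.
move=> sAB; rewrite [weight B](big_setID A) (setIidPr sAB) /= lerDl.
by apply: sumr_ge0 => i _; apply: ltW.
Qed.

Lemma short_sub A B : A \subset B -> short l B -> short l A.
Proof. by rewrite !shortE => /weight_le; apply: le_lt_trans. Qed.

(* Genericity: no set has exactly half of the total length. *)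
Lemma short_or_long S : short l S || (half < weight S).
Proof.
rewrite shortE; case: ltgtP => // halfS; case/eqP: (hgen S).
by rewrite -/(weight S) -/(weight (~: S)) weightC halfS; lra.
Qed.

Lemma short_compl S : half < weight S -> short l (~: S).
Proof. by rewrite shortE weightC; lra. Qed.

Lemma subset_window A (t M : R) :
  (forall i, i \in A -> l i <= M) -> t <= weight A -> 0 < t + M ->
  exists2 S : {set 'I_n}, S \subset A & t <= weight S < t + M.
Proof.
have [k] : exists k, #|A| = k by exists #|A|.
elim: k A => [|k IH] A cardA hM tA tM.
  by exists set0; rewrite ?sub0set // weight0 tM -weight0 -(cards0_eq cardA) tA.
have [x xA] : exists x, x \in A by apply/set0Pn; rewrite -card_gt0 cardA.
have cardAx : #|A :\ x| = k by move: cardA; rewrite (cardsD1 x) xA => -[].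
have wA : weight A = l x + weight (A :\ x) by rewrite /weight (big_setD1 x).
have [tAx | Axt] := lerP t (weight (A :\ x)).
  have hMx i : i \in A :\ x -> l i <= M by case/setD1P => _; apply: hM.
  have [S sS hS] := IH _ cardAx hMx tAx tM.
  by exists S => //; apply: subset_trans sS (subsetDl _ _).
by exists A => //; rewrite tA /=; have := hM x xA; lra.
Qed.

End Weights.

Section Moves.
Variables (R : realFieldType) (n : nat) (l : 'I_n -> R).
Hypothesis hpos : forall i, 0 < l i.
Implicit Types (T U : triple n) (X Y Z : {set 'I_n}).

(* Basic move: if two vertices share the part Z and X' is contained in X,
   then (X',Y',Z) arises from (X,Y,Z) by moving X \ X' from X into Y. *)
Lemma reach_shrink X Y Z X' Y' :
  vertex3 l (X, Y, Z) -> vertex3 l (X', Y', Z) -> X' \subset X ->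
  reach l 1 (X, Y, Z) (X', Y', Z).
Proof.
move=> v v' subX; case/vertex3P: (v) => pt [_ nY nZ] [sX sY sZ].
case/vertex3P: (v') => pt' [nX' _ _] [sX' _ _].
have [moved0 | moved] := eqVneq (X :\: X') set0.
  have eX : X' = X by set_solve.
  have eY : Y' = Y by set_solve.
  by apply: reach_refl; rewrite eX eY same3_refl.
apply: reach_adj; rewrite /adj v v' /=; apply/existsP; exists (X', X :\: X', Y, Z).
apply/existsP; exists ord0; apply/existsP; exists (Ordinal (isT : (1 < 4)%N)).
have -> : edge4 l (X', X :\: X', Y, Z).
  apply/edge4P; split; [set_solve | by split | split => //].
  exact: (short_sub hpos (subsetDl X X') sX).
rewrite /Defs.merge /cyc3 /mk3 /=.
by apply/andP; split; apply/or3P; apply: Or31; apply/eqP; congr (_, _, _); set_solve.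
Qed.

Lemma reach_move T U X Y Z X' Y' :
  same3 T (X, Y, Z) -> same3 U (X', Y', Z) -> vertex3 l T -> vertex3 l U ->
  X' \subset X -> reach l 1 T U.
Proof.
move=> hT hU vT vU subX; apply: reach_source (same3_sym hT) _.
apply: reach_target (same3_sym hU) _; apply: reach_shrink subX.
- exact: vertex3_same3 hT vT.
- exact: vertex3_same3 hU vU.
Qed.

End Moves.

Section Hubs.
Variables (R : realFieldType) (n : nat) (l : 'I_n -> R).
Hypothesis hpos : forall i, 0 < l i.
Hypothesis hgen : forall J : {set 'I_n}, \sum_(i in J) l i != \sum_(i in ~: J) l i.
Variable m : 'I_n.
Local Notation half := (totlen l / 2%:R).

Lemma hub_hub B C B' C' :
  vertex3 l ([set m], B, C) -> vertex3 l ([set m], B', C') ->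
  reach l 3 ([set m], B, C) ([set m], B', C').
Proof.
move=> v v'; case/vertex3P: (v) => pt [nm nB nC] [sm sB sC].
case/vertex3P: (v') => pt' [_ _ nC'] [_ _ sC'].
have /orP [shortM | longM] := short_or_long hgen ([set m] :|: (B :&: B')).
  have [BC'0 | BC'] := eqVneq (B :&: C') set0.
    apply: (reach_mono (k := 1)) => //.
    by apply: (reach_move hpos (X := C) (Y := B) (Z := [set m]) (X' := C') (Y' := B'));
      [same3_solve | same3_solve | done | done | set_solve].
  have [CB'0 | CB'] := eqVneq (C :&: B') set0.
    apply: (reach_mono (k := 1)) => //.
    by apply: (reach_move hpos (X := B) (Y := C) (Z := [set m]) (X' := B') (Y' := C'));
      [same3_solve | same3_solve | done | done | set_solve].
  set P := [set m] :|: (B :&: B').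
  have mP : m \in P by rewrite !inE eqxx.
  have v1 : vertex3 l (P, B :&: C', C).
    apply/vertex3P; split; [set_solve | split => // | split => //].
    - exact: mem_neq0 mP.
    - exact: (short_sub hpos (subsetIl B C') sB).
  have v2 : vertex3 l (P, C', C :&: B').
    apply/vertex3P; split; [set_solve | split => // | split => //].
    - exact: mem_neq0 mP.
    - exact: (short_sub hpos (subsetIl C B') sC).
  have r1 : reach l 1 ([set m], B, C) (P, B :&: C', C).
    by apply: (reach_move hpos (X := B) (Y := [set m]) (Z := C) (X' := B :&: C') (Y' := P));
      [same3_solve | same3_solve | done | done | set_solve].
  have r2 : reach l 1 (P, B :&: C', C) (P, C', C :&: B').
    by apply: (reach_move hpos (X := C) (Y := B :&: C') (Z := P) (X' := C :&: B') (Y' := C'));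
      [same3_solve | same3_solve | done | done | set_solve].
  have r3 : reach l 1 (P, C', C :&: B') ([set m], B', C').
    by apply: (reach_move hpos (X := P) (Y := C :&: B') (Z := C') (X' := [set m]) (Y' := B'));
      [same3_solve | same3_solve | done | done | set_solve].
  exact: reach_trans r1 (reach_trans r2 r3).
set Q := C :|: (B :&: C').
have v1 : vertex3 l ([set m], B :&: B', Q).
  apply/vertex3P; split; [set_solve | split => // | split => //].
  - apply: contraTneq longM => BB'0; rewrite BB'0 setU0 -leNgt; exact: ltW sm.
  - exact: (neq0_sub (subsetUl C _) nC).
  - exact: (short_sub hpos (subsetIl B B') sB).
  - have -> : Q = ~: ([set m] :|: (B :&: B')) by set_solve.
    exact: short_compl longM.
have r1 : reach l 1 ([set m], B, C) ([set m], B :&: B', Q).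
  by apply: (reach_move hpos (X := B) (Y := C) (Z := [set m]) (X' := B :&: B') (Y' := Q));
    [same3_solve | same3_solve | done | done | set_solve].
have r2 : reach l 1 ([set m], B :&: B', Q) ([set m], B', C').
  by apply: (reach_move hpos (X := Q) (Y := B :&: B') (Z := [set m]) (X' := C') (Y' := B'));
    [same3_solve | same3_solve | done | done | set_solve].
exact: reach_mono (reach_trans r1 r2).
Qed.

Hypothesis hm : forall i, l i <= l m.

(* A vertex whose first part contains a longest side m reaches a hub in two
   moves: first shift a set S of A \ {m} into B, then the rest of A \ {m}
   into C.  S is chosen by [subset_window] so that both moves keep the
   receiving part short. *)
Lemma reach_hub_first A B C :
  vertex3 l (A, B, C) -> m \in A ->
  exists B', exists C', vertex3 l ([set m], B', C') /\ reach l 2 (A, B, C) ([set m], B', C').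
Proof.
move=> v mA; case/vertex3P: (v) => pt [_ nB nC] [sA sB sC].
have wA : weight l A = l m + weight l (A :\ m) by rewrite /weight (big_setD1 m).
have wAB : weight l (~: C) = weight l A + weight l B.
  by rewrite -weightU; [congr weight; set_solve | set_solve].
have [S sS /andP [lowS highS]] :
    exists2 S : {set 'I_n}, S \subset A :\ m & half - weight l B - l m <= weight l S < half - weight l B.
  have := subset_window (A := A :\ m) (t := half - weight l B - l m) (M := l m) (fun i _ => hm i).
  rewrite addrNK; apply; move: wAB; rewrite weightC; rewrite !shortE in sB sC; lra.
set U := [set m] :|: B :|: S.
have wU : weight l U = l m + weight l B + weight l S.
  by rewrite weightU ?weightU ?weight1 //; set_solve.
have longU : half < weight l U.
  by case/orP: (short_or_long hgen U) => //; rewrite shortE wU; lra.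
have sBS : short l (B :|: S).
  by rewrite shortE weightU; [lra | set_solve].
have v1 : vertex3 l (A :\: S, B :|: S, C).
  apply/vertex3P; split; [set_solve | split => // | split => //].
  - have mS : m \notin S by apply/negP => /(subsetP sS); rewrite !inE eqxx.
    by apply: (mem_neq0 (x := m)); rewrite inE mS mA.
  - exact: (neq0_sub (subsetUl B S) nB).
  - exact: (short_sub hpos (subsetDl A S) sA).
have v2 : vertex3 l ([set m], B :|: S, ~: U).
  apply/vertex3P; split; [set_solve | split => // | split => //].
  - by apply: (mem_neq0 (x := m)); rewrite inE.
  - exact: (neq0_sub (subsetUl B S) nB).
  - by apply: (neq0_sub _ nC); set_solve.
  - by apply: (short_sub hpos _ sA); set_solve.
  - exact: short_compl longU.
exists (B :|: S), (~: U); split => //.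
have r1 : reach l 1 (A, B, C) (A :\: S, B :|: S, C).
  by apply: (reach_move hpos (X := A) (Y := B) (Z := C) (X' := A :\: S) (Y' := B :|: S));
    [same3_solve | same3_solve | done | done | set_solve].
have r2 : reach l 1 (A :\: S, B :|: S, C) ([set m], B :|: S, ~: U).
  by apply: (reach_move hpos (X := A :\: S) (Y := C) (Z := B :|: S) (X' := [set m]) (Y' := ~: U));
    [same3_solve | same3_solve | done | done | set_solve].
exact: reach_trans r1 r2.
Qed.

Lemma reach_hub V :
  vertex3 l V -> exists B, exists C, vertex3 l ([set m], B, C) /\ reach l 2 V ([set m], B, C).
Proof.
case: V => [[X Y] Z] v.
have from_shift A B C : same3 (A, B, C) (X, Y, Z) -> m \in A ->
    exists B', exists C', vertex3 l ([set m], B', C') /\ reach l 2 (X, Y, Z) ([set m], B', C').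
  move=> hs mA; have vA := vertex3_same3 (same3_sym hs) v.
  have [B' [C' [hub r]]] := reach_hub_first vA mA.
  by exists B', C'; split => //; apply: reach_source hs r.
case/vertex3P: (v) => pt _ _; move: (pt m).
case mX: (m \in X); first by move=> _; apply: from_shift mX; same3_solve.
case mY: (m \in Y); first by move=> _; apply: from_shift mY; same3_solve.
case mZ: (m \in Z) => // _; by apply: from_shift mZ; same3_solve.
Qed.

End Hubs.

Theorem mainTheorem8 (R : realFieldType) (n : nat) (l : 'I_n -> R)
  (hn : (4 <= n)%N)
  (hpos : forall i, 0 < l i)
  (htri : forall i, l i < \sum_(j < n | j != i) l j)
  (hgen : forall J : {set 'I_n}, \sum_(i in J) l i != \sum_(i in ~: J) l i)
  (V V' : triple n) (hV : vertex3 l V) (hV' : vertex3 l V') :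
  exists s : seq (triple n),
    [/\ (size s <= 7)%N, path (adj l) V s &
        cyc3 V' (last V s) || cyc3 (mirror V') (last V s)].
Proof.
have i0 : 'I_n := Ordinal (leq_trans (isT : (0 < 4)%N) hn).
have [m _ hm] := @arg_maxP _ _ _ i0 xpredT l isT.
have [B [C [hub r]]] := reach_hub hpos hgen (fun i => hm i isT) hV.
have [B' [C' [hub' r']]] := reach_hub hpos hgen (fun i => hm i isT) hV'.
exact: reach_trans (reach_trans r (hub_hub hpos hgen hub hub')) (reach_sym r').
Qed.
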